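(* Let $t\in\mathbb{R}\setminus\{2\}$ (when $t>2$, all matrices and vectors involved are assumed to have strictly positive entries), $\varepsilon\ge 0$, $\tilde r,\tilde c\in\tilde\Delta_n$. For any $\tilde P,\tilde Q\in\tilde U_n^{\varepsilon}(\tilde r,\tilde c)$ and any $\beta\in[0,1]$, $$\big(\beta\,\tilde P^{1/t^*}+(1-\beta)\,\tilde Q^{1/t^*}\big)^{t^*}\in\tilde U_n^{\varepsilon}(\tilde r,\tilde c).$$
   Context: $t^*=1/(2-t)$; powers of vectors/matrices are entrywise. For $s\neq1$, $\log_s(z)=(z^{1-s}-1)/(1-s)$; $\log_1=\log$ and $\log_0(z)=z-1$. Co-simplex: $\tilde\Delta_n=\{\tilde p\in\mathbb{R}^n:\tilde p\ge0,\ \sum_i\tilde p_i^{1/t^*}=1\}$. Co-polytope: $\tilde U_n(\tilde r,\tilde c)=\{\tilde P\in\mathbb{R}^{n\times n}_{\ge0}:\sum_j\tilde P_{ij}^{1/t^*}=\tilde r_i^{1/t^*}\ \forall i,\ \sum_i\tilde P_{ij}^{1/t^*}=\tilde c_j^{1/t^*}\ \forall j\}$. Tempered relative entropy: $D_t(\tilde u\|\tilde v)=\sum_k[\tilde u_k(\log_t\tilde u_k-\log_t\tilde v_k)-\log_{t-1}\tilde u_k+\log_{t-1}\tilde v_k]$ (sum over all entries). Ball: $\tilde U_n^{\varepsilon}(\tilde r,\tilde c)=\{\tilde P\in\tilde U_n(\tilde r,\tilde c): D_t(\tilde P\|\tilde r\tilde c^\top)\le\varepsilon\}$. *)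

From HB Require Import structures.
From mathcomp Require Import all_boot all_order all_algebra.
From mathcomp Require Import all_classical all_reals.
From mathcomp Require Import exp.
Set Implicit Arguments. Unset Strict Implicit. Unset Printing Implicit Defensive.
Import Order.TTheory GRing.Theory Num.Theory.
Local Open Scope ring_scope.

Section TemperedDefs.
Variable R : realType.

Definition tstar (t : R) : R := 1 / (2 - t).

Definition logs (s z : R) : R :=
  if s == 1 then ln z else (powR z (1 - s) - 1) / (1 - s).

Definition cosimplex (t : R) (n : nat) (p : 'rV[R]_n) : Prop :=
  (forall i, 0 <= p 0 i) /\ \sum_(i < n) powR (p 0 i) (1 / tstar t) = 1.

Definition copolytope (t : R) (n : nat) (r c : 'rV[R]_n) (P : 'M[R]_n) : Prop :=
  [/\ forall i j, 0 <= P i j,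
      forall i, \sum_(j < n) powR (P i j) (1 / tstar t) = powR (r 0 i) (1 / tstar t)
    & forall j, \sum_(i < n) powR (P i j) (1 / tstar t) = powR (c 0 j) (1 / tstar t)].

Definition Dt (t : R) (n : nat) (U V : 'M[R]_n) : R :=
  \sum_(i < n) \sum_(j < n)
    (U i j * (logs t (U i j) - logs t (V i j))
     - logs (t - 1) (U i j) + logs (t - 1) (V i j)).

Definition outer (n : nat) (r c : 'rV[R]_n) : 'M[R]_n :=
  \matrix_(i, j) (r 0 i * c 0 j).

Definition coball (t eps : R) (n : nat) (r c : 'rV[R]_n) (P : 'M[R]_n) : Prop :=
  copolytope t r c P /\ Dt t P (outer r c) <= eps.

Definition comix (t beta : R) (n : nat) (P Q : 'M[R]_n) : 'M[R]_n :=
  \matrix_(i, j) powR (beta * powR (P i j) (1 / tstar t)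
                   + (1 - beta) * powR (Q i j) (1 / tstar t)) (tstar t).

End TemperedDefs.

From HB Require Import structures.
From mathcomp Require Import all_boot all_order all_algebra.
From mathcomp Require Import all_classical all_reals.
From mathcomp Require Import exp.
From mathcomp Require Import interval_inference sequences convex hoelder.
From mathcomp Require Import ring lra.
Import Order.TTheory GRing.Theory Num.Theory.
Local Open Scope ring_scope.

(* Write e = t^* = 1/(2-t) and describe a nonnegative matrix P by
   its co-coordinates p = P^(1/e) = P^(2-t), so that P = p^e.  The co-mixture
   of P and Q is then the matrix whose co-coordinates are the ordinary convex
   combination m = b p + (1-b) q.
   - The co-polytope constraints are linear in the co-coordinates, hence they
     are preserved by the co-mixture.
   - Each summand of D_t(. || V), seen as a function of the co-coordinate u,
     is convex: for t = 1 it is u ln u plus an affine function of u, and for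
     t <> 1 it is an affine function of u plus -(V^(1-t)/(1-t)) u^e, which is
     convex because u^e is concave when t < 1 (0 < e <= 1) and convex when
     1 < t < 2 (e >= 1) or t > 2 (e < 0, positive arguments).
   Summing, D_t(mix || r c^T) <= b D_t(P || r c^T) + (1-b) D_t(Q || r c^T),
   which is at most eps. *)

Section ScalarConvexity.
Local Set Implicit Arguments. Local Unset Strict Implicit.
Variables (R : realType) (b : R).
Hypotheses (b0 : 0 <= b) (b1 : b <= 1).
Local Notation mix x y := (b * x + (1 - b) * y).

(* The tangent-line bound ln z <= z - 1 at z = m/x, multiplied by x; the form
   x ln m - x ln x <= m - x also covers x = 0 (recall ln 0 = 0). *)
Lemma ln_tangent (x m : R) : 0 <= x -> 0 < m ->
  x * ln m - x * ln x <= m - x.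
Proof.
move=> x0 m0; have [->|xn0] := eqVneq x 0; first by rewrite !mul0r subrr subr0 ltW.
have xp : 0 < x by rewrite lt0r xn0.
have := expR_ge1Dx (ln (m / x)); rewrite lnK ?posrE ?divr_gt0 // => hmx.
rewrite -mulrBr -ln_div ?posrE //.
have := ler_wpM2l (ltW xp) hmx; rewrite mulrCA mulfV ?gt_eqF // mulr1.
lra.
Qed.

Let b1' : 0 <= 1 - b. Proof. by rewrite subr_ge0. Qed.

Let mix_ge0 (x y : R) : 0 <= x -> 0 <= y -> 0 <= mix x y.
Proof. by move=> x0 y0; rewrite addr_ge0 // mulr_ge0. Qed.

Lemma powR_convex (e x y : R) : 1 <= e -> 0 <= x -> 0 <= y ->
  powR (mix x y) e <= mix (powR x e) (powR y e).
Proof.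
move=> e1 x0 y0; have := @convex_powR R e e1 (Itv01 b0 b1) x y.
by rewrite !convRE /=; apply; rewrite inE /= in_itv /= ?x0 ?y0.
Qed.

(* z |-> z^e is concave on [0, +oo) for 0 < e <= 1: apply the convexity of
   z |-> z^(1/e) to x^e, y^e and take e-th powers. *)
Lemma powR_concave (e x y : R) : 0 < e -> e <= 1 -> 0 <= x -> 0 <= y ->
  mix (powR x e) (powR y e) <= powR (mix x y) e.
Proof.
move=> e0 e1 x0 y0.
have powRK z : 0 <= z -> powR (powR z e) e^-1 = z.
  by move=> z0; rewrite -powRrM mulfV ?gt_eqF // powRr1.
have e1' : 1 <= e^-1 by rewrite invf_ge1.
have := @powR_convex e^-1 _ _ e1' (powR_ge0 x e) (powR_ge0 y e).
rewrite !powRK // => /(@ge0_ler_powR R e (ltW e0)).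
rewrite -powRrM mulVf ?gt_eqF // powRr1 ?mix_ge0 ?powR_ge0 //.
by apply; rewrite nnegrE ?mix_ge0 ?powR_ge0.
Qed.

(* z |-> z^e is convex on (0, +oo) for e < 0, since z^e = exp(e ln z) with
   ln concave, e < 0 and exp increasing and convex. *)
Lemma powR_convex_neg (e x y : R) : e < 0 -> 0 < x -> 0 < y ->
  powR (mix x y) e <= mix (powR x e) (powR y e).
Proof.
move=> e0 x0 y0.
have m0 : 0 < mix x y.
  have [->|bn0] := eqVneq b 0; first by rewrite mul0r add0r subr0 mul1r.
  have bp : 0 < b by rewrite lt0r bn0.
  by rewrite ltr_pwDl ?mulr_gt0 // mulr_ge0 // ltW.
rewrite /powR !gt_eqF //.
have := @concave_ln R (Itv01 b0 b1) x y x0 y0; rewrite !convRE /= => ln_mix.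
apply: (@le_trans _ _ (expR (mix (e * ln x) (e * ln y)))).
  by rewrite ler_expR mulrCA (mulrCA (1 - b)) -mulrDr ler_wnM2l // ltW.
by have := @convex_expR R (Itv01 b0 b1) (e * ln x) (e * ln y); rewrite !convRE.
Qed.

(* z |-> z ln z is convex on [0, +oo): add the tangent inequalities of ln at
   the mean m, weighted by b x and (1-b) y. *)
Lemma xlnx_convex (x y : R) : 0 <= x -> 0 <= y ->
  mix x y * ln (mix x y) <= mix (x * ln x) (y * ln y).
Proof.
move=> x0 y0; set m := mix x y.
have [m0|mp] := eqVneq m 0.
  have /andP[/eqP bx0 /eqP cy0] : (b * x == 0) && ((1 - b) * y == 0).
    by rewrite -paddr_eq0 ?mulr_ge0 // -/m m0.
  by rewrite m0 mul0r !mulrA bx0 cy0 !mul0r addr0.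
have {}mp : 0 < m by rewrite lt0r mp mix_ge0.
have tx := ler_wpM2l b0 (ln_tangent x0 mp).
have ty := ler_wpM2l b1' (ln_tangent y0 mp).
have -> : m * ln m = b * (x * ln m) + (1 - b) * (y * ln m) by rewrite /m; ring.
have : b * (m - x) + (1 - b) * (m - y) = 0 by rewrite /m; ring.
lra.
Qed.

End ScalarConvexity.

Section CoCoordinates.
Local Set Implicit Arguments. Local Unset Strict Implicit.
Variables (R : realType) (t : R).
Local Notation e := (tstar t).

(* The co-coordinate exponent 1/t^* is 2 - t (also when t = 2, as 0^-1 = 0). *)
Lemma tstar_invE : 1 / e = 2 - t.
Proof. by rewrite /tstar !div1r invrK. Qed.

Hypothesis t2 : t != 2.

Let e0 : e != 0.
Proof. by rewrite /tstar div1r invr_eq0 subr_eq0 eq_sym. Qed.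

Lemma cocoordK (z : R) : 0 <= z -> powR (powR z e) (1 / e) = z.
Proof. by move=> z0; rewrite -powRrM mul1r mulfV // powRr1. Qed.

Lemma cocoordVK (z : R) : 0 <= z -> powR (powR z (1 / e)) e = z.
Proof. by move=> z0; rewrite -powRrM mul1r mulVf // powRr1. Qed.

Definition ent (U V : R) : R :=
  U * (logs t U - logs t V) - logs (t - 1) U + logs (t - 1) V.

Lemma DtE (n : nat) (U V : 'M[R]_n) :
  Dt t U V = \sum_(i < n) \sum_(j < n) ent (U i j) (V i j).
Proof. by []. Qed.

Lemma ent_cocoordE (u V : R) : t != 1 -> 0 <= u ->
  ent (powR u e) V = u * (1 / (1 - t) - 1 / (2 - t)) + (1 / (2 - t) + logs (t - 1) V)
    - powR V (1 - t) / (1 - t) * powR u e.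
Proof.
move=> t1 u0.
have t2' : 2 - t != 0 by rewrite subr_eq0 eq_sym.
have t1' : 1 - t != 0 by rewrite subr_eq0 eq_sym.
have tm1 : (t - 1 == 1) = false by apply/negbTE; rewrite subr_eq.
have back : powR (powR u e) (2 - t) = u by rewrite -tstar_invE cocoordK.
(* U * U^(1-t) = U^(2-t) = u, which makes U * logs t U affine in u. *)
have UlogU : powR u e * powR (powR u e) (1 - t) = u.
  have [->|un0] := eqVneq u 0; first by rewrite powR0 // mul0r.
  have Un0 : powR u e != 0 by rewrite powR_eq0 negb_and un0.
  rewrite -{1}(powRr1 (powR_ge0 u e)) -powRD ?Un0 ?implybT //.
  by rewrite (_ : 1 + (1 - t) = 2 - t) ?back //; ring.
rewrite /ent /logs (negbTE t1) tm1 (_ : 1 - (t - 1) = 2 - t) ?back; last by ring.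
move: UlogU; set U := powR u e; set Z := powR U (1 - t) => UZ.
by rewrite -UZ; field; apply/andP.
Qed.

Lemma ent1E (u V : R) : t = 1 -> 0 <= u ->
  ent (powR u e) V = u * ln u - u * (ln V + 1) + (1 + logs (t - 1) V).
Proof.
move=> t1 u0; rewrite /ent /logs /tstar t1 (_ : 2 - 1 = 1 :> R); last by ring.
by rewrite eqxx subrr eq_sym oner_eq0 subr0 !divr1 !(powRr1 u0); ring.
Qed.

Section Mixture.
Variable b : R.
Hypotheses (b0 : 0 <= b) (b1 : b <= 1).
Local Notation mix x y := (b * x + (1 - b) * y).

(* The term -(W/(1-t)) u^e of the summand is convex in u >= 0 (u > 0 when
   t > 2); this is where the three regimes t < 1, 1 < t < 2, t > 2 differ. *)
Lemma copow_term_convex (W x y : R) : t != 1 -> 0 <= W -> 0 <= x -> 0 <= y ->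
  (2 < t -> 0 < x /\ 0 < y) ->
  - (W / (1 - t)) * powR (mix x y) e <= - (W / (1 - t)) * mix (powR x e) (powR y e).
Proof.
move=> t1 W0 x0 y0 pos.
have [tlt1|tgt1] := ltP t 1.
  have e_pos : 0 < e by rewrite /tstar divr_gt0 // subr_gt0; lra.
  have e_le1 : e <= 1 by rewrite /tstar ler_pdivrMr ?mul1r ?subr_gt0; lra.
  have w0 : 0 <= W / (1 - t) by rewrite divr_ge0 // subr_ge0 ltW.
  by rewrite !mulNr lerN2 ler_wpM2l // powR_concave.
have w0 : 0 <= - (W / (1 - t)) by rewrite oppr_ge0 mulr_ge0_le0 // invr_le0 subr_le0.
apply: ler_wpM2l => //; have [tlt2|tge2] := ltP t 2.
  have e_ge1 : 1 <= e by rewrite /tstar ler_pdivlMr ?mul1r ?subr_gt0 //; lra.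
  exact: powR_convex.
have t_gt2 : 2 < t by rewrite lt_neqAle eq_sym t2 tge2.
have [xp yp] := pos t_gt2.
by apply: powR_convex_neg => //; rewrite /tstar div1r invr_lt0 subr_lt0.
Qed.

Lemma ent_cocoord_convex (V x y : R) : 0 <= x -> 0 <= y ->
  (2 < t -> 0 < x /\ 0 < y) ->
  ent (powR (mix x y) e) V <= mix (ent (powR x e) V) (ent (powR y e) V).
Proof.
move=> x0 y0 pos; have m0 : 0 <= mix x y by rewrite addr_ge0 // mulr_ge0 // subr_ge0.
have [t1|t1] := eqVneq t 1.
  rewrite !ent1E //; have := xlnx_convex b0 b1 x0 y0.
  set L := ln V + 1; set C := 1 + logs (t - 1) V.
  have -> : mix (x * ln x - x * L + C) (y * ln y - y * L + C)
    = mix (x * ln x) (y * ln y) - mix x y * L + C by ring.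
  lra.
rewrite !ent_cocoordE //.
have := copow_term_convex t1 (powR_ge0 V (1 - t)) x0 y0 pos.
set k1 := 1 / (1 - t) - 1 / (2 - t); set k0 := _ + logs _ _.
set w := powR V (1 - t) / (1 - t).
set M := powR (mix x y) e; set X := powR x e; set Y := powR y e.
have -> : mix (x * k1 + k0 - w * X) (y * k1 + k0 - w * Y)
  = mix x y * k1 + k0 - w * mix X Y by ring.
rewrite !mulNr; lra.
Qed.

Lemma sum_mix (n : nat) (F G : 'I_n -> R) :
  \sum_(i < n) mix (F i) (G i) = mix (\sum_(i < n) F i) (\sum_(i < n) G i).
Proof. by rewrite big_split /= -!mulr_sumr. Qed.

Lemma comix_cocoord (n : nat) (P Q : 'M[R]_n) i j :
  powR (comix t b P Q i j) (1 / e) = mix (powR (P i j) (1 / e)) (powR (Q i j) (1 / e)).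
Proof.
by rewrite mxE; apply: cocoordK; rewrite addr_ge0 // mulr_ge0 ?powR_ge0 // subr_ge0.
Qed.

(* The co-polytope is stable under co-mixtures: its constraints are linear in
   the co-coordinates. *)
Lemma copolytope_comix (n : nat) (r c : 'rV[R]_n) (P Q : 'M[R]_n) :
  copolytope t r c P -> copolytope t r c Q -> copolytope t r c (comix t b P Q).
Proof.
move=> [_ Pr Pc] [_ Qr Qc]; have mixK z : mix z z = z by ring.
split=> [i j|i|j]; first by rewrite mxE powR_ge0.
- by under eq_bigr do rewrite comix_cocoord; rewrite sum_mix Pr Qr mixK.
- by under eq_bigr do rewrite comix_cocoord; rewrite sum_mix Pc Qc mixK.
Qed.

Lemma Dt_comix_convex (n : nat) (V P Q : 'M[R]_n) :
  (forall i j, 0 <= P i j) -> (forall i j, 0 <= Q i j) ->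
  (2 < t -> (forall i j, 0 < P i j) /\ (forall i j, 0 < Q i j)) ->
  Dt t (comix t b P Q) V <= mix (Dt t P V) (Dt t Q V).
Proof.
move=> P0 Q0 pos; rewrite !DtE -sum_mix; apply: ler_sum => i _.
rewrite -sum_mix; apply: ler_sum => j _.
have pos_ij : 2 < t -> 0 < powR (P i j) (1 / e) /\ 0 < powR (Q i j) (1 / e).
  by move=> /pos[Pp Qp]; rewrite !powR_gt0.
have := ent_cocoord_convex (V i j) (powR_ge0 _ _) (powR_ge0 _ _) pos_ij.
by rewrite !cocoordVK // mxE.
Qed.

End Mixture.
End CoCoordinates.

Theorem proposition2 (R : realType) (n : nat) (t eps beta : R)
    (r c : 'rV[R]_n) (P Q : 'M[R]_n) :
  t != 2 ->
  0 <= eps ->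
  cosimplex t r -> cosimplex t c ->
  (2 < t -> [/\ forall i, 0 < r 0 i, forall j, 0 < c 0 j,
               forall i j, 0 < P i j & forall i j, 0 < Q i j]) ->
  coball t eps r c P -> coball t eps r c Q ->
  0 <= beta <= 1 ->
  coball t eps r c (comix t beta P Q).
Proof.
move=> t2 _ _ _ pos [PU DP] [QU DQ] /andP[b0 b1].
split; first exact: copolytope_comix.
have [P0 _ _] := PU; have [Q0 _ _] := QU.
apply: le_trans (Dt_comix_convex t2 b0 b1 _ P0 Q0 _) _.
  by move=> /pos[_ _ Pp Qp].
have b1' : 0 <= 1 - beta by rewrite subr_ge0.
have := ler_wpM2l b0 DP; have := ler_wpM2l b1' DQ; lra.
Qed.
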